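(* For $n=3$: $\mathbb{O}_{3,0}\simeq\mathbb{O}_{2,1}\simeq\mathbb{O}_{1,2}$, and $\mathbb{O}_{0,3}$ is not isomorphic to any of them by an isomorphism preserving the structure of $\mathbb{Z}_2^3$-graded algebra.
   Context: $\mathbb{Z}_2=\{0,1\}$. For $p+q=n\ge3$, $\mathbb{O}_{p,q}$ is the real algebra with basis $\{u_x: x\in\mathbb{Z}_2^n\}$ and product $u_x\cdot u_y=(-1)^{f(x,y)}u_{x+y}$, where $f(x,y)=\sum_{1\le i<j<k\le n}(x_ix_jy_k+x_iy_jx_k+y_ix_jx_k)+\sum_{1\le i\le j\le n}x_iy_j+\sum_{1\le i\le p}x_iy_i$. Homogeneous elements are scalar multiples of some $u_x$; an isomorphism preserving the graded structure is an algebra isomorphism sending homogeneous elements to homogeneous elements. *)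

From HB Require Import structures.
From mathcomp Require Import all_boot all_order all_algebra.
From mathcomp Require Import reals.
Set Implicit Arguments. Unset Strict Implicit. Unset Printing Implicit Defensive.
Import Order.TTheory GRing.Theory Num.Theory.
Local Open Scope ring_scope.

(* Z_2^n, coordinates indexed 0..n-1 (paper: 1..n) *)
Notation Z2n n := {ffun 'I_n -> bool}.

Definition zadd n (x y : Z2n n) : Z2n n := [ffun i => x i (+) y i].

(* The cocycle f(x,y) of the paper, as a natural number (only its parity
   matters). Index shift: paper's 1 <= i <= p becomes (i : 'I_n) < p. *)
Definition fcoc (p n : nat) (x y : Z2n n) : nat :=
  (\sum_(i : 'I_n) \sum_(j : 'I_n) \sum_(k : 'I_n | (i < j) && (j < k))
      (x i * x j * y k + x i * y j * x k + y i * x j * x k)%N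
   + \sum_(i : 'I_n) \sum_(j : 'I_n | i <= j) (x i * y j)%N
   + \sum_(i : 'I_n | (i < p)%N) (x i * y i)%N)%N.

(* Elements of O_{p,q}: real coordinate vectors on the basis {u_x}. *)
Notation vec R n := {ffun Z2n n -> R%type}.

Definition vscale (R : realType) n (c : R) (a : vec R n) : vec R n :=
  [ffun z => c * a z].

Definition ub (R : realType) n (x : Z2n n) : vec R n :=
  [ffun z => if z == x then 1 else 0].

(* product of O_{p,q} extended bilinearly from u_x u_y = (-1)^f(x,y) u_{x+y} *)
Definition Omul (R : realType) (p q : nat) (a b : vec R (p + q)) : vec R (p + q) :=
  [ffun z => \sum_(x : Z2n (p + q)) \sum_(y : Z2n (p + q) | zadd x y == z)
      (-1) ^+ (fcoc p x y) * a x * b y].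

Definition homogeneous (R : realType) n (a : vec R n) : Prop :=
  exists (x : Z2n n) (c : R), a = vscale c (ub R x).

Definition graded_isomorphic (R : realType) (p q p' q' : nat) : Prop :=
  exists phi : vec R (p + q) -> vec R (p' + q'),
    [/\ (forall (c : R) (a b : vec R (p + q)), phi (vscale c a + b) = vscale c (phi a) + phi b),
        bijective phi,
        (forall a b, phi (Omul a b) = Omul (phi a) (phi b)) &
        (forall a, homogeneous a -> homogeneous (phi a))].

From HB Require Import structures.
From mathcomp Require Import all_boot all_order all_algebra.
From mathcomp Require Import reals.
From mathcomp Require Import ring lra.
Set Implicit Arguments. Unset Strict Implicit. Unset Printing Implicit Defensive.
Import Order.TTheory GRing.Theory Num.Theory.
Local Open Scope ring_scope.

(* A linear automorphism tau of Z_2^n and signs e with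
   f_{p,q}(tau x, tau y) = f_{p',q'}(x, y) + e(x) + e(y) + e(x + y)  (mod 2)
   give a graded isomorphism O_{p,q} -> O_{p',q'}, u_{tau x} |-> (-1)^e(x) u_x;
   for n = 3 such pairs are exhibited explicitly.
   Conversely, in O_{0,3} every u_x with x <> 0 squares to -u_0, whereas in
   O_{p,q} with p > 0 the first generator squares to +u_0. A graded
   isomorphism fixes the unit u_0 and sends some u_x to c u_{e_1} with c <> 0
   and x <> 0; squaring gives -1 = c^2. *)

Lemma zaddK n (x y : Z2n n) : zadd x (zadd x y) = y.
Proof. by apply/ffunP => i; rewrite !ffunE addKb. Qed.

Definition z0 n : Z2n n := [ffun _ => false].

Lemma zadd0l n (x : Z2n n) : zadd (z0 n) x = x.
Proof. by apply/ffunP => i; rewrite !ffunE. Qed.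

Lemma zaddxx n (x : Z2n n) : zadd x x = z0 n.
Proof. by apply/ffunP => i; rewrite !ffunE addbb. Qed.

Lemma zadd_eq0 n (x y : Z2n n) : (zadd x y == z0 n) = (x == y).
Proof.
apply/eqP/eqP => [/ffunP xy0|->]; last exact: zaddxx.
by apply/ffunP => i; move: (xy0 i); rewrite !ffunE; case: (x i); case: (y i).
Qed.

Lemma fcoc0l p n (y : Z2n n) : fcoc p (z0 n) y = 0%N.
Proof.
rewrite /fcoc !big1 // => i _; rewrite ?big1 ?ffunE // => j _; rewrite ?big1 ?ffunE //.
by move=> k _; rewrite !ffunE !(mul0n, muln0).
Qed.

Lemma fcoc0r p n (x : Z2n n) : fcoc p x (z0 n) = 0%N.
Proof.
rewrite /fcoc !big1 // => i _; rewrite ?big1 ?ffunE ?muln0 // => j _;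
  rewrite ?big1 ?ffunE ?muln0 //.
by move=> k _; rewrite !ffunE !(mul0n, muln0).
Qed.

Definition zfirst n : Z2n n.+1 := [ffun i => i == ord0].

Lemma fcoc_zfirst p n : fcoc p (zfirst n) (zfirst n) = (1 + (0 < p))%N.
Proof.
rewrite /fcoc [X in (X + _ + _)%N]big1 ?add0n => [|i _]; last first.
  rewrite big1 // => j _; rewrite big1 // => k /andP[ij _].
  by rewrite [zfirst n j]ffunE -val_eqE /= gtn_eqF ?(leq_ltn_trans _ ij) // !muln0.
have x0 : zfirst n ord0 = true by rewrite ffunE.
have xS i : i != ord0 -> zfirst n i = false by rewrite ffunE => /negPf.
rewrite (bigD1 ord0) //= [X in (_ + X + _)%N]big1 => [|i /xS ->]; last first.
  by rewrite big1.
rewrite (bigD1 ord0) //= big1 => [|j /xS ->]; last by rewrite muln0.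
rewrite big_mkcond (bigD1 ord0) //= big1 => [|i /xS ->]; last by case: ifP.
by rewrite x0; case: (0 < p)%N.
Qed.

Lemma vscale1 (R : realType) n (a : vec R n) : vscale 1 a = a.
Proof. by apply/ffunP => z; rewrite ffunE mul1r. Qed.

Lemma vec_decomp (R : realType) n (a : vec R n) : a = \sum_x vscale (a x) (ub R x).
Proof.
apply/ffunP => z; rewrite sum_ffunE (bigD1 z) //= big1 => [|x /negPf zx].
  by rewrite !ffunE eqxx mulr1 addr0.
by rewrite !ffunE eq_sym zx mulr0.
Qed.

Section Multiplication.
Variables (R : realType) (p q : nat).
Local Notation n := (p + q).

Lemma OmulE (a b : vec R n) z :
  Omul a b z = \sum_x (-1) ^+ fcoc p x (zadd x z) * a x * b (zadd x z).
Proof.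
rewrite ffunE; apply: eq_bigr => x _; rewrite (big_pred1 (zadd x z)) // => y /=.
by apply/eqP/eqP => [<-|->]; rewrite zaddK.
Qed.

Lemma Omul_ub (x y : Z2n n) :
  Omul (ub R x) (ub R y) = vscale ((-1) ^+ fcoc p x y) (ub R (zadd x y)).
Proof.
apply/ffunP => z; rewrite OmulE (bigD1 x) //= big1 => [|x' /negPf x'x]; last first.
  by rewrite ffunE x'x mulr0 mul0r.
rewrite !ffunE eqxx mulr1 addr0.
have [<-|yz] := eqVneq (zadd x y) z; first by rewrite zaddK eqxx mulr1.
by rewrite ifF ?mulr0 //; apply: contraNF yz => /eqP <-; rewrite zaddK.
Qed.

Lemma OmulZ (c d : R) (a b : vec R n) :
  Omul (vscale c a) (vscale d b) = vscale (c * d) (Omul a b).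
Proof.
apply/ffunP => z; rewrite !OmulE ffunE OmulE mulr_sumr; apply: eq_bigr => x _.
by rewrite !ffunE; ring.
Qed.

Lemma Omul1l (a : vec R n) : Omul (ub R (z0 n)) a = a.
Proof.
apply/ffunP => z; rewrite OmulE (bigD1 (z0 n)) //= big1 => [|x /negPf x0].
  by rewrite fcoc0l zadd0l ffunE eqxx expr0 !mul1r addr0.
by rewrite ffunE x0 mulr0 mul0r.
Qed.

Lemma Omul1r (a : vec R n) : Omul a (ub R (z0 n)) = a.
Proof.
apply/ffunP => z; rewrite OmulE (bigD1 z) //= big1 => [|x zx].
  by rewrite zaddxx fcoc0r ffunE eqxx expr0 mul1r mulr1 addr0.
by rewrite ffunE zadd_eq0 (negPf zx) mulr0.
Qed.

End Multiplication.

Lemma Omul_morph_unit (R : realType) p q p' q'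
    (phi : vec R (p + q) -> vec R (p' + q')) (g : vec R (p' + q') -> vec R (p + q)) :
  (forall a b, phi (Omul a b) = Omul (phi a) (phi b)) -> cancel g phi ->
  phi (ub R (z0 _)) = ub R (z0 _).
Proof.
move=> phiM gK; set e := phi _.
have e_left c : Omul e c = c by rewrite -[c]gK -phiM Omul1l.
by rewrite -[e]Omul1r e_left.
Qed.

Section LinearMap.
Variables (R : realType) (n m : nat) (phi : vec R n -> vec R m).
Hypothesis phi_lin : forall c a b, phi (vscale c a + b) = vscale c (phi a) + phi b.

Lemma linearD a b : phi (a + b) = phi a + phi b.
Proof. by rewrite -[a in LHS]vscale1 phi_lin vscale1. Qed.

Lemma linear0 : phi 0 = 0.
Proof. by apply/(addrI (phi 0)); rewrite -linearD !addr0. Qed.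

Lemma linearZ c a : phi (vscale c a) = vscale c (phi a).
Proof. by rewrite -[vscale c a]addr0 phi_lin linear0 addr0. Qed.

Lemma linear_decomp a : phi a = \sum_x vscale (a x) (phi (ub R x)).
Proof.
rewrite {1}(vec_decomp a) (big_morph phi linearD linear0).
by apply: eq_bigr => x _; rewrite linearZ.
Qed.

Lemma graded_surjective (g : vec R m -> vec R n) :
    cancel g phi -> (forall a, homogeneous a -> homogeneous (phi a)) ->
  forall y, exists x c, c != 0 /\ phi (ub R x) = vscale c (ub R y).
Proof.
move=> gK hom y.
have [x phix_y] : exists x, phi (ub R x) y != 0.
  apply/existsP; apply: contraT; rewrite negb_exists => /forallP phi_y0.
  have : ub R y y = 0.
    rewrite -(gK (ub R y)) linear_decomp sum_ffunE big1 // => x _.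
    by rewrite ffunE (eqP (negbNE (phi_y0 x))) mulr0.
  by rewrite ffunE eqxx => /eqP; rewrite oner_eq0.
have [x' [c phix]] : homogeneous (phi (ub R x)).
  by apply: hom; exists x, 1; rewrite vscale1.
move: phix_y; rewrite phix !ffunE.
have [->|_] := eqVneq y x'; last by rewrite mulr0 eqxx.
by rewrite mulr1 => c0; exists x, c.
Qed.

End LinearMap.

Lemma not_graded_isomorphic_by_squares (R : realType) p q p' q' (y : Z2n (p' + q')) :
    (forall x : Z2n (p + q), x != z0 _ -> odd (fcoc p x x)) ->
    y != z0 _ -> ~~ odd (fcoc p' y y) ->
  ~ graded_isomorphic R p q p' q'.
Proof.
move=> sqr_neg y0 sqr_y [phi [lin [g gK Kg] phiM hom]].
have phi1 := Omul_morph_unit phiM Kg.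
have [x [c [c0 phix]]] := graded_surjective lin Kg hom y.
have x0 : x != z0 _.
  apply: contra_neq c0 => x0; move/ffunP: phix => /(_ y).
  by rewrite x0 phi1 !ffunE eqxx (negPf y0) mulr1.
have /ffunP/(_ (z0 _)) : phi (Omul (ub R x) (ub R x)) = vscale (c * c) (ub R (z0 _)).
  by rewrite phiM phix OmulZ Omul_ub -signr_odd (negPf sqr_y) zaddxx vscale1.
rewrite Omul_ub -signr_odd sqr_neg // zaddxx (linearZ lin) phi1 !ffunE eqxx !mulr1.
have : 0 < c * c by rewrite lt0r mulf_neq0 //= -expr2 sqr_ge0.
lra.
Qed.

Lemma graded_isomorphic_by_twist (R : realType) p q p' q'
    (tau : Z2n (p' + q') -> Z2n (p + q)) (e : Z2n (p' + q') -> bool) :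
    bijective tau -> {morph tau : x y / zadd x y} ->
    (forall x y, odd (fcoc p (tau x) (tau y)) (+) e (zadd x y)
                 = odd (fcoc p' x y) (+) e x (+) e y) ->
  graded_isomorphic R p q p' q'.
Proof.
move=> [sig tauK sigK] tauD twist.
pose phi (a : vec R (p + q)) : vec R (p' + q') := [ffun z => (-1) ^+ e z * a (tau z)].
exists phi; split.
- by move=> c a b; apply/ffunP => z; rewrite !ffunE; ring.
- pose psi (b : vec R (p' + q')) : vec R (p + q) := [ffun x => (-1) ^+ e (sig x) * b (sig x)].
  by exists psi => [a|b]; apply/ffunP => z; rewrite !ffunE ?sigK ?tauK signrMK.
- move=> a b; apply/ffunP => z; rewrite ffunE !OmulE mulr_sumr.
  rewrite (reindex tau) /=; last by exists sig => x _; [apply: tauK | apply: sigK].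
  apply: eq_bigr => x _; rewrite !ffunE -tauD.
  have := congr1 (fun b : bool => (-1) ^+ b : R) (twist x (zadd x z)).
  rewrite /= zaddK !signr_addb !signr_odd => sgn.
  by rewrite !mulrA (mulrC ((-1) ^+ e z)) sgn; ring.
- move=> a [x [c ->]]; exists (sig x), (c * (-1) ^+ e (sig x)).
  apply/ffunP => z; rewrite !ffunE (can2_eq tauK sigK).
  by case: eqP => [->|_]; ring.
Qed.

Local Close Scope ring_scope.
Local Notation o0 := (@Ordinal 3 0 isT).
Local Notation o1 := (@Ordinal 3 1 isT).
Local Notation o2 := (@Ordinal 3 2 isT).

Definition fcoc3b (p : nat) (a0 a1 a2 b0 b1 b2 : bool) : bool :=
  [&& a0, a1 & b2] (+) [&& a0, b1 & a2] (+) [&& b0, a1 & a2] (+)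
  (a0 && b0) (+) (a0 && b1) (+) (a0 && b2) (+) (a1 && b1) (+) (a1 && b2) (+) (a2 && b2)
  (+) [&& 0 < p, a0 & b0] (+) [&& 1 < p, a1 & b1] (+) [&& 2 < p, a2 & b2].

Lemma odd_fcoc3 p (x y : Z2n 3) :
  odd (fcoc p x y) = fcoc3b p (x o0) (x o1) (x o2) (y o0) (y o1) (y o2).
Proof.
rewrite /fcoc !big_mkcond /= !big_ord_recl !big_ord0 /=.
rewrite ?(big_mkcond (fun k : 'I_3 => _ < k)) ?(big_mkcond (fun k : 'I_3 => _ <= k)).
rewrite ?(big_mkcond (fun k : 'I_3 => false)) /= !big_ord_recl !big_ord0 /=.
rewrite (big_mkcond (fun i : 'I_3 => i < p)) !big_ord_recl big_ord0 /=.
have -> : lift ord0 (lift ord0 ord0) = o2 :> 'I_3 by apply: val_inj.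
have -> : lift ord0 ord0 = o1 :> 'I_3 by apply: val_inj.
have -> : ord0 = o0 :> 'I_3 by apply: val_inj.
rewrite /fcoc3b.
by move: (0 < p) (1 < p) (2 < p) (x o0) (x o1) (x o2) (y o0) (y o1) (y o2); do 9 case.
Qed.

Lemma Z2n3_ext (x y : Z2n 3) : x o0 = y o0 -> x o1 = y o1 -> x o2 = y o2 -> x = y.
Proof.
move=> h0 h1 h2; apply/ffunP => -[[|[|[|i]]] Hi] //.
- by rewrite (_ : Ordinal Hi = o0) //; apply: val_inj.
- by rewrite (_ : Ordinal Hi = o1) //; apply: val_inj.
- by rewrite (_ : Ordinal Hi = o2) //; apply: val_inj.
Qed.

Lemma odd_fcoc_sqr_03 (x : Z2n (0 + 3)) : x != z0 _ -> odd (fcoc 0 x x).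
Proof.
rewrite odd_fcoc3 /fcoc3b; apply: contraNT => sqr_even.
apply/eqP/Z2n3_ext; rewrite ffunE; move: sqr_even;
  by case: (x o0); case: (x o1); case: (x o2).
Qed.

Lemma not_graded_isomorphic_03 (R : realType) p q : ~ graded_isomorphic R 0 3 p.+1 q.
Proof.
apply: (@not_graded_isomorphic_by_squares R 0 3 p.+1 q (zfirst (p + q))).
- exact: odd_fcoc_sqr_03.
- by apply/eqP => /ffunP/(_ ord0); rewrite !ffunE.
- by rewrite fcoc_zfirst.
Qed.

Definition tau_30_21 (z : Z2n (2 + 1)) : Z2n (3 + 0) :=
  [ffun i : 'I_3 => match nat_of_ord i with 0 => z o2 | 1 => z o1 | _ => z o0 (+) z o2 end].
Definition tau_21_30 (t : Z2n (3 + 0)) : Z2n (2 + 1) :=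
  [ffun i : 'I_3 => match nat_of_ord i with 0 => t o2 (+) t o0 | 1 => t o1 | _ => t o0 end].
Definition sign_30_21 (z : Z2n (2 + 1)) : bool := z o0 && (z o1 (+) z o2).

Lemma graded_isomorphic_30_21 (R : realType) : graded_isomorphic R 3 0 2 1.
Proof.
apply: (@graded_isomorphic_by_twist R 3 0 2 1 tau_30_21 sign_30_21).
- by exists tau_21_30 => z; apply: Z2n3_ext; rewrite !ffunE /=;
    case: (z o0); case: (z o2).
- move=> x y; apply: Z2n3_ext; rewrite !ffunE /=;
  by case: (x o0); case: (x o1); case: (x o2); case: (y o0); case: (y o1); case: (y o2).
- move=> x y; rewrite !odd_fcoc3 /sign_30_21 !ffunE /=.
  by move: (x o0) (x o1) (x o2) (y o0) (y o1) (y o2); do 6 case.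
Qed.

Definition tau_21_12 (z : Z2n (1 + 2)) : Z2n (2 + 1) :=
  [ffun i : 'I_3 => match nat_of_ord i with 0 => z o2 | 1 => z o0 (+) z o2 | _ => z o1 end].
Definition tau_12_21 (t : Z2n (2 + 1)) : Z2n (1 + 2) :=
  [ffun i : 'I_3 => match nat_of_ord i with 0 => t o1 (+) t o0 | 1 => t o2 | _ => t o0 end].
Definition sign_21_12 (z : Z2n (1 + 2)) : bool := z o2 && (z o0 (+) z o1).

Lemma graded_isomorphic_21_12 (R : realType) : graded_isomorphic R 2 1 1 2.
Proof.
apply: (@graded_isomorphic_by_twist R 2 1 1 2 tau_21_12 sign_21_12).
- by exists tau_12_21 => z; apply: Z2n3_ext; rewrite !ffunE /=;
    case: (z o0); case: (z o1); case: (z o2).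
- move=> x y; apply: Z2n3_ext; rewrite !ffunE /=;
  by case: (x o0); case: (x o1); case: (x o2); case: (y o0); case: (y o1); case: (y o2).
- move=> x y; rewrite !odd_fcoc3 /sign_21_12 !ffunE /=.
  by move: (x o0) (x o1) (x o2) (y o0) (y o1) (y o2); do 6 case.
Qed.

Theorem mainTheorem4 (R : realType) :
  [/\ graded_isomorphic R 3 0 2 1,
      graded_isomorphic R 2 1 1 2,
      ~ graded_isomorphic R 0 3 3 0,
      ~ graded_isomorphic R 0 3 2 1 &
      ~ graded_isomorphic R 0 3 1 2].
Proof.
split; [exact: graded_isomorphic_30_21 | exact: graded_isomorphic_21_12
       | exact: not_graded_isomorphic_03 ..].
Qed.
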